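(* Consider the two-player Tower of Hanoi game under normal play on $l\ge4$ pegs. If $n=2$, the game is a draw for the ending conditions (EC1), (EC2), (EC3), and the first player (Anh) wins for (EC4) and (EC5). If $n=1$, the first player wins (in her first move) for (EC1), (EC4), (EC5).
   Context: Tower of Hanoi on $l$ pegs (labeled $1,\dots,l$) with $n$ disks of pairwise distinct sizes: a position assigns each disk to a peg, disks on each peg stacked with sizes decreasing from bottom to top. A legal move transfers the top disk of one peg to a different peg that is empty or has a larger top disk. A tower position is one with all disks on one peg. Two-player game: Anh (first player) and Bao (second player) alternate moves starting from the position with all disks on Peg 1; a player may not move the disk that the opponent moved in the immediately preceding move. The game ends when the tower has been transferred to a final peg, according to one fixed ending condition: (EC1) all disks on a given peg distinct from Peg 1; (EC2) all disks on Peg 1, the largest disk having been moved at least once; (EC3) all disks on Peg 1, the smallest disk having been moved at least once; (EC4) all disks on any peg, the largest disk having been moved at least once; (EC5) all disks on any peg, the smallest disk having been moved at least once. A move creating a tower position that does not end the game (tower on a non-final peg) is not allowed. Normal play: the player who makes the last (game-ending) move wins; if neither player can force a win, the game is a draw. *)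

From mathcomp Require Import all_boot.
Set Implicit Arguments. Unset Strict Implicit. Unset Printing Implicit Defensive.

(* Conventions: pegs are 'I_l (paper's Peg k is peg k-1 here, so Peg 1 = 0);
   disks are 'I_n, disk d having size d (0 = smallest, n-1 = largest).
   A position is a map disk -> peg; the stacking order on each peg is
   determined by the sizes, so every map is a position. *)

Inductive ending_condition :=
| EC1 (f : nat)   (* all disks on the given peg f (0-based), f <> Peg 1 *)
| EC2 | EC3 | EC4 | EC5.

Record state (l n : nat) := State {
  pos : 'I_n -> 'I_l;
  last_moved : option 'I_n;
  big_moved : bool;
  small_moved : bool
}.

Definition is_tower l n (p : 'I_n -> 'I_l) (k : 'I_l) : Prop :=
  forall d, p d = k.

Definition tower_position l n (s : state l n) : Prop :=
  exists k, is_tower (pos s) k.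

Definition legal_move l n (s : state l n) (d : 'I_n) (q : 'I_l) : Prop :=
  last_moved s <> Some d /\ pos s d <> q /\
  (forall e : 'I_n, e < d -> pos s e <> pos s d /\ pos s e <> q).

Definition apply_move l n (s : state l n) (d : 'I_n) (q : 'I_l) : state l n :=
  State (fun e => if e == d then q else pos s e) (Some d)
        (big_moved s || (val d == n.-1)) (small_moved s || (val d == 0)).

Definition ends l n (c : ending_condition) (s : state l n) : Prop :=
  match c with
  | EC1 f => exists k : 'I_l, val k = f /\ is_tower (pos s) k
  | EC2 => exists k : 'I_l, val k = 0 /\ is_tower (pos s) k /\ big_moved s
  | EC3 => exists k : 'I_l, val k = 0 /\ is_tower (pos s) k /\ small_moved s
  | EC4 => exists k : 'I_l, is_tower (pos s) k /\ big_moved s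
  | EC5 => exists k : 'I_l, is_tower (pos s) k /\ small_moved s
  end.

Definition game_move l n (c : ending_condition) (s : state l n) d q : Prop :=
  legal_move s d q /\
  (tower_position (apply_move s d q) -> ends c (apply_move s d q)).

(* Win s : the player to move in s can force a win (in finitely many moves).
   Lose s : the opponent (the player who just moved) can force a win.
   A player with no allowed move loses (normal play). *)
Inductive Win l n (c : ending_condition) : state l n -> Prop :=
| win_intro s d q :
    game_move c s d q ->
    (ends c (apply_move s d q) \/ Lose c (apply_move s d q)) -> Win c s
with Lose l n (c : ending_condition) : state l n -> Prop :=
| lose_intro s :
    (forall d q, game_move c s d q ->
       ~ ends c (apply_move s d q) /\ Win c (apply_move s d q)) -> Lose c s.

Definition Draw l n (c : ending_condition) (s : state l n) : Prop :=
  ~ Win c s /\ ~ Lose c s.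

Definition wins_in_one l n (c : ending_condition) (s : state l n) : Prop :=
  exists d q, game_move c s d q /\ ends c (apply_move s d q).

Definition start l n (Hl : 0 < l) : state l n :=
  State (fun _ => Ordinal Hl) None false false.

From mathcomp Require Import all_boot zify.

Set Implicit Arguments.
Unset Strict Implicit.
Unset Printing Implicit Defensive.

(* With two disks the small disk is the only one ever free on top of a tower,
   and after it moves the opponent can move the large disk to any peg not
   occupied by the small one.  On at least four pegs the defender can therefore
   always answer a small-disk move by a large-disk move to a fresh peg that is
   neither occupied nor final: nobody can reach a final tower, whence a draw for
   (EC1)-(EC3).  Under (EC4)/(EC5) any tower of two moved disks ends the game,
   and Anh wins by putting the small disk back on the large one.  With one disk
   Anh wins at once by moving it to the final peg. *)

(* The induction runs through the nested [\/] and [/\] of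
   [Win]/[Lose], out of reach of the generated schemes. *)
Section Trap.

Variables (l n : nat) (c : ending_condition) (A B : state l n -> Prop).

Hypothesis trap_move : forall s d q, A s -> game_move c s d q ->
  ~ ends c (apply_move s d q) /\ B (apply_move s d q).
Hypothesis trap_reply : forall s, B s ->
  exists d q, game_move c s d q /\ A (apply_move s d q).

Fixpoint Win_notin_trap s (w : Win c s) {struct w} : ~ A s :=
  match w with
  | win_intro s d q mv next => fun As =>
      let: conj not_end Bs' := trap_move As mv in
      match next with
      | or_introl e => not_end e
      | or_intror lo => Lose_notin_trap lo Bs'
      end
  end
with Lose_notin_trap s (lo : Lose c s) {struct lo} : ~ B s :=
  match lo with
  | lose_intro s all_win => fun Bs =>
      let: ex_intro d (ex_intro q (conj mv As')) := trap_reply Bs in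
      let: conj _ w := all_win d q mv in Win_notin_trap w As'
  end.

End Trap.

Lemma exists_ord_notin l (s : seq nat) : size s < l ->
  exists q : 'I_l, val q \notin s.
Proof.
move=> small_s; apply/existsP; apply: contraLR small_s; rewrite negb_exists.
move=> /forallP all_in; rewrite -leqNgt -[l](size_iota 0).
apply: uniq_leq_size (iota_uniq 0 l) _ => k; rewrite mem_iota add0n => /= lt_kl.
by have := all_in (Ordinal lt_kl); rewrite negbK.
Qed.

Lemma ends_tower_position l n c (s : state l n) : ends c s -> tower_position s.
Proof. by case: c => [f||||] [k]; firstorder. Qed.

Definition final_peg (c : ending_condition) : option nat :=
  match c with
  | EC1 f => Some f
  | EC2 | EC3 => Some 0
  | EC4 | EC5 => None
  end.

Lemma ends_final_peg l n c f (s : state l n) : final_peg c = Some f ->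
  ends c s -> exists k : 'I_l, val k = f /\ is_tower (pos s) k.
Proof. by case: c => [g||||] //= [<-] [k]; firstorder. Qed.

Lemma Win_of_wins_in_one l n c (s : state l n) : wins_in_one c s -> Win c s.
Proof. by case=> d [q [mv e]]; apply: win_intro mv (or_introl e). Qed.

Lemma tower_start1_move l (Hl : 0 < l) q :
  is_tower (pos (apply_move (start 1 Hl) ord0 q)) q.
Proof. by move=> d; rewrite /= ord1. Qed.

Lemma wins_in_one_start1 l (Hl : 0 < l) c (q : 'I_l) : 0 < q ->
  ends c (apply_move (start 1 Hl) ord0 q) -> wins_in_one c (start 1 Hl).
Proof.
move=> q_gt0 ends_q; exists ord0, q; do 2 split=> //.
by split=> //; split=> // q0; rewrite -q0 in q_gt0.
Qed.

Section TwoDisks.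

Variable l : nat.
Implicit Types (s : state l 2) (q : 'I_l).

Local Notation small := (ord0 : 'I_2).
Local Notation large := (ord_max : 'I_2).

Lemma ord2_cases (d : 'I_2) : d = small \/ d = large.
Proof. by case: d => [[|[|]] //] H; [left|right]; apply: val_inj. Qed.

Lemma tower_position2 s : tower_position s <-> pos s small = pos s large.
Proof.
split=> [[k tow]|eq_sl]; first by rewrite !tow.
by exists (pos s large) => d; case: (ord2_cases d) => ->.
Qed.

Lemma legal_small s q :
  legal_move s small q <-> last_moved s <> Some small /\ pos s small <> q.
Proof. by split=> [[? []]|[? ?]] //; do 2 split. Qed.

Lemma legal_large s q : legal_move s large q <->
  [/\ last_moved s <> Some large, pos s large <> q,
       pos s small <> pos s large & pos s small <> q].
Proof.
split=> [[? [? /(_ small isT) []]] //|[? ? ? ?]]; do 2 split=> //.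
by move=> e; rewrite ltnS leqn0 => /eqP e0; rewrite (_ : e = small) //; apply: val_inj.
Qed.

Definition small_off_large s : Prop :=
  last_moved s = Some small /\ pos s small <> pos s large.

Lemma move_small_apart c s q : last_moved s <> Some small ->
  q <> pos s small -> q <> pos s large ->
  game_move c s small q /\ small_off_large (apply_move s small q).
Proof.
move=> last_s q_small q_large.
have apart : small_off_large (apply_move s small q) by [].
split=> //; split; first by apply/legal_small; split=> // /esym.
by move/tower_position2.
Qed.

Lemma move_large_apart c s q : small_off_large s ->
  q <> pos s small -> q <> pos s large ->
  game_move c s large q.
Proof.
case=> last_s apart q_small q_large; split.
  by apply/legal_large; rewrite last_s; split=> // /esym.
by move/tower_position2 => /= /esym.
Qed.

Lemma large_move_not_tower c s q : game_move c s large q ->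
  ~ tower_position (apply_move s large q).
Proof. by move=> [/legal_large [_ _ _ small_q] _] /tower_position2. Qed.

Section Defender.

Variables (c : ending_condition) (f : nat).
Hypothesis final_c : final_peg c = Some f.

(* Bao's invariant, for positions with Anh to move: the large disk never rests
   on the final peg, so the small disk cannot complete a final tower. *)
Definition defended s : Prop :=
  [/\ last_moved s <> Some small,
      last_moved s = None -> pos s small = pos s large &
      last_moved s = Some large -> val (pos s large) <> f].

Lemma defended_move s d q : defended s -> game_move c s d q ->
  ~ ends c (apply_move s d q) /\ small_off_large (apply_move s d q).
Proof.
case=> not_small start_tower safe_large [legal tower_ends].
case: (ord2_cases d) => ->{d} in legal tower_ends *; last first.
  move/legal_large: legal => [not_large _ small_off _]; exfalso.
  case E: (last_moved s) => [d|] in not_small not_large start_tower *.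
    by case: (ord2_cases d) => E'; subst d.
  exact: small_off (start_tower erefl).
move/legal_small: legal => [_ small_q].
have q_large : q <> pos s large.
  move=> q_eq; have : ends c (apply_move s small q).
    by apply: tower_ends; apply/tower_position2.
  move/(ends_final_peg final_c) => [k [k_f tow]].
  case E: (last_moved s) => [d|] in not_small start_tower safe_large.
    case: (ord2_cases d) => E'; subst d => //.
    by apply: (safe_large erefl); rewrite -k_f -(tow large).
  by apply: small_q; rewrite start_tower // q_eq.
split; last by split.
by move/ends_tower_position/tower_position2.
Qed.

Lemma not_Win_defended s : 3 < l -> defended s -> ~ Win c s.
Proof.
move=> l_gt3 def_s win_s; apply: Win_notin_trap win_s def_s; first exact: defended_move.
move=> t apart.
have [q] := @exists_ord_notin l [:: val (pos t small); val (pos t large); f] l_gt3.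
rewrite !inE !val_eqE => /norP [/eqP q_small /norP [/eqP q_large q_f]].
exists large, q; split; first exact: move_large_apart.
by split=> //= _; apply/eqP.
Qed.

End Defender.

Lemma not_Lose_small_not_last c s : 2 < l ->
  last_moved s <> Some small -> ~ Lose c s.
Proof.
move=> l_gt2 last_s lose_s.
apply: (Lose_notin_trap (A := small_off_large)
         (B := fun t => last_moved t <> Some small)) lose_s last_s
  => [t d q apart mv|t not_small].
  case: (ord2_cases d) => E; subst d; first by case: mv => [[]]; case: apart.
  by split=> //; move/ends_tower_position; apply: large_move_not_tower mv.
have [q] := @exists_ord_notin l [:: val (pos t small); val (pos t large)] l_gt2.
rewrite !inE !val_eqE => /norP [/eqP q_small /eqP q_large].
by exists small, q; apply: move_small_apart.
Qed.

Lemma Win_start2 c (Hl : 0 < l) : 1 < l ->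
  (forall (t : state l 2) k, big_moved t -> small_moved t -> is_tower (pos t) k ->
     ends c t) ->
  Win c (start 2 Hl).
Proof.
move=> l_gt1 tower_ends.
have [p] := @exists_ord_notin l [:: 0] l_gt1; rewrite inE => p_neq0.
have p_start : p <> pos (start 2 Hl) small by move/(congr1 val)/eqP; apply/negP.
have [mv apart] : game_move c (start 2 Hl) small p /\
                  small_off_large (apply_move (start 2 Hl) small p).
  by apply: move_small_apart.
apply: win_intro mv _; right; apply: lose_intro => d q reply.
case: (ord2_cases d) => E; subst d; first by case: reply => [[]]; case: apart.
split; first by move/ends_tower_position; apply: large_move_not_tower reply.
case: reply => /legal_large [_ _ _ p_q] _.
set t := apply_move _ large q.
have tower_q : is_tower (pos (apply_move t small q)) q.
  by move=> d; case: (ord2_cases d) => ->.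
apply: (@win_intro _ _ _ _ small q); last by left; apply: tower_ends tower_q.
by split; [apply/legal_small | move=> _; apply: tower_ends tower_q].
Qed.

End TwoDisks.

Theorem mainTheorem5 (l : nat) (Hl : 0 < l) : 4 <= l ->
  (* n = 2 *)
  ((forall f, 0 < f < l -> Draw (EC1 f) (start 2 Hl)) /\
   Draw EC2 (start 2 Hl) /\ Draw EC3 (start 2 Hl) /\
   Win EC4 (start 2 Hl) /\ Win EC5 (start 2 Hl)) /\
  (* n = 1 *)
  ((forall f, 0 < f < l ->
      Win (EC1 f) (start 1 Hl) /\ wins_in_one (EC1 f) (start 1 Hl)) /\
   (Win EC4 (start 1 Hl) /\ wins_in_one EC4 (start 1 Hl)) /\
   (Win EC5 (start 1 Hl) /\ wins_in_one EC5 (start 1 Hl))).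
Proof.
move=> l_ge4; have l_gt1 : 1 < l by lia.
have draw2 c f : final_peg c = Some f -> Draw c (start 2 Hl).
  move=> final_c; split; first by apply: (not_Win_defended final_c) => //; split.
  by apply: not_Lose_small_not_last => //; lia.
have win1 c (q : 'I_l) : 0 < q -> ends c (apply_move (start 1 Hl) ord0 q) ->
    Win c (start 1 Hl) /\ wins_in_one c (start 1 Hl).
  move=> q_gt0 /(wins_in_one_start1 q_gt0) win.
  by split=> //; apply: Win_of_wins_in_one.
have tower1 := tower_start1_move Hl.
split.
  split; first by move=> f _; apply: (draw2 _ f).
  do 2 (split; first exact: (draw2 _ 0)).
  by split; apply: Win_start2 => // t k *; exists k.
split.
  move=> f /andP [f_gt0 f_lt_l].
  by apply: (win1 _ (Ordinal f_lt_l)) => //; exists (Ordinal f_lt_l).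
by split; apply: (win1 _ (Ordinal l_gt1)) => //; exists (Ordinal l_gt1).
Qed.
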